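(* Let $C_0$ be an uncountable subset of $\omega_1$ and for each $\alpha\in C_0$ let $\rho_\alpha,\omega_\alpha:[0,\infty)\to[0,\infty)$ be increasing functions with $\rho_\alpha(t)\le\omega_\alpha(t)$ for all $t\ge0$ and $\lim_{t\to\infty}\rho_\alpha(t)=\infty$. Then there exist increasing functions $\rho,\omega:[0,\infty)\to[0,\infty)$ and a decreasing sequence $C_0\supset C_1\supset C_2\supset\cdots$ of uncountable subsets of $\omega_1$ such that (i) $\rho(t)\le\omega(t)$ for all $t\ge0$ and $\lim_{t\to\infty}\rho(t)=\infty$; (ii) for all $k\in\mathbb{N}$, all $\alpha\in C_k$ and all $0\le t\le k$ we have $\rho(t)\le\rho_\alpha(t)$ and $\omega_\alpha(t)\le\omega(t)$. *)

From HB Require Import structures.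
From mathcomp Require Import all_boot all_order all_algebra.
From mathcomp Require Import all_classical all_reals all_analysis.
Set Implicit Arguments. Unset Strict Implicit. Unset Printing Implicit Defensive.
Import Order.TTheory GRing.Theory Num.Theory.
Local Open Scope classical_set_scope.
Local Open Scope ring_scope.

(* (T, lt) is (order-isomorphic to) the first uncountable ordinal omega_1:
   a strict well-order, all of whose proper initial segments are countable,
   while T itself is uncountable. *)
Definition is_omega1 (T : Type) (lt : T -> T -> Prop) : Prop :=
  [/\ well_founded lt,
      (forall x y z, lt x y -> lt y z -> lt x z),
      (forall x y, lt x y \/ x = y \/ lt y x),
      (forall x, countable [set y | lt y x]) &
      ~ countable [set: T]].

Definition incr_nonneg (R : realType) (f : R -> R) : Prop :=
  (forall t, 0 <= t -> 0 <= f t) /\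
  (forall s t, 0 <= s -> s <= t -> f s <= f t).

From HB Require Import structures.
From mathcomp Require Import all_boot all_order all_algebra.
From mathcomp Require Import all_classical all_reals all_analysis.
Set Implicit Arguments. Unset Strict Implicit. Unset Printing Implicit Defensive.
Import Order.TTheory GRing.Theory Num.Theory.
Local Open Scope classical_set_scope.
Local Open Scope ring_scope.

(* Only the uncountability of C0 matters.  Starting from C0 we refine recursively: given an uncountable
   C_{k-1}, two pigeonhole arguments over countably many "levels" yield an
   uncountable C_k and naturals s_k >= k and N_k such that every a in C_k has
     k <= rho_a(s_k)   and   omega_a(k) <= N_k.
   From the sequences (s_k) and (N_k) alone we then build step functions
     rho(t)   = the largest j <= floor t with s_j <= floor t,
     omega(t) = rho(t) + max_{j <= floor t + 1} N_j,
   which are increasing, satisfy rho <= omega and rho -> oo (because s_j >= j),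
   and bound rho_a from below and omega_a from above on [0,k] whenever the
   bounds above hold for all indices 1..k, which is the case on C_k. *)

Lemma uncountable_pigeonhole (T : Type) (A : set T) (P : nat -> set T) :
  ~ countable A -> A `<=` \bigcup_n P n -> exists n, ~ countable (A `&` P n).
Proof.
move=> HA Acover; apply: contrapT => all_countable; apply: HA.
have : countable (\bigcup_(n in [set: nat]) (A `&` P n)).
  apply: bigcup_countable => // n _; apply: contrapT => Hn.
  by apply: all_countable; exists n.
apply: sub_countable; apply: subset_card_le => a Aa.
by have [n _ Pn] := Acover a Aa; exists n.
Qed.

Lemma uncountable_bounded (R : realType) (T : Type) (A : set T) (h : T -> R) :
  ~ countable A -> exists N : nat, ~ countable (A `&` [set a | h a <= N%:R]).
Proof.
move=> HA; apply: uncountable_pigeonhole HA _ => a _.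
by exists (Num.truncn (h a)).+1 => //; apply/ltW/truncnS_gt.
Qed.

Lemma uncountable_eventually (R : realType) (T : Type) (A : set T)
    (f : T -> R -> R) (c : R) (m : nat) :
  ~ countable A -> (forall a, A a -> f a t @[t --> +oo] --> +oo) ->
  exists n, (m <= n)%N /\ ~ countable (A `&` [set a | c <= f a n%:R]).
Proof.
move=> HA f_cvg.
suff [n Hn] : exists n, ~ countable (A `&` [set a | c <= f a (n + m)%:R]).
  by exists (n + m)%N; rewrite leq_addl.
apply: uncountable_pigeonhole HA _ => a Aa.
have /cvgryPge /(_ c) [M [_ HM]] := f_cvg a Aa.
exists (Num.truncn `|M|).+1 => //=; apply: HM.
apply: (le_lt_trans (ler_norm M)); apply: (lt_le_trans (truncnS_gt _)).
by rewrite natrD lerDl ler0n.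
Qed.

Section Refinement.
Variables (R : realType) (T : Type) (C0 : set T) (rhoA omA : T -> R -> R).
Hypothesis rhoA_cvg : forall a, C0 a -> rhoA a t @[t --> +oo] --> +oo.

Definition refinable (A : set T) : Prop := ~ countable A /\ A `<=` C0.

Lemma refine_step (A : set T) (k : nat) : refinable A ->
  exists (B : set T) (s N : nat),
    [/\ refinable B, B `<=` A, (k <= s)%N &
        forall a, B a -> k%:R <= rhoA a s%:R /\ omA a k%:R <= N%:R].
Proof.
move=> [HA AC0].
have [N HN] := uncountable_bounded (fun a => omA a k%:R) HA.
have [s [ks Hs]] := uncountable_eventually k%:R k HN
  (fun a Aa => rhoA_cvg (AC0 a Aa.1)).
exists (A `&` [set a | omA a k%:R <= N%:R] `&` [set a | k%:R <= rhoA a s%:R]), s, N.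
split => //; last by move=> a [[_ ?] ?].
  by split => // a [[Aa _] _]; exact: AC0.
by move=> a [[]].
Qed.

Lemma refining_sequence : ~ countable C0 ->
  exists (C : nat -> set T) (s N : nat -> nat),
    [/\ C 0%N = C0, (forall k, C k.+1 `<=` C k), (forall k, ~ countable (C k)),
        (forall j, (j <= s j)%N) &
        forall j a, (0 < j)%N -> C j a ->
          j%:R <= rhoA a (s j)%:R /\ omA a j%:R <= (N j)%:R].
Proof.
move=> HC0.
pose stage := {A : set T | refinable A}.
have /choice [next Hnext] : forall x : stage * nat, exists y : stage * nat * nat,
  [/\ sval y.1.1 `<=` sval x.1, (x.2 <= y.1.2)%N &
      forall a, sval y.1.1 a -> x.2%:R <= rhoA a y.1.2%:R /\
                                omA a x.2%:R <= y.2%:R].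
  move=> [[A HA] k]; have [B [s [N [HB B_sub_A k_le_s B_bounds]]]] := refine_step k HA.
  by exists (exist _ B HB, s, N).
pose start : stage := exist _ C0 (conj HC0 (@subset_refl _ C0)).
pose Cs := fix Cs (k : nat) : stage :=
  if k is k'.+1 then (next (Cs k', k)).1.1 else start.
exists (fun k => sval (Cs k)), (fun j => if j is j'.+1 then (next (Cs j', j)).1.2 else 0%N),
  (fun j => (next (Cs j.-1, j)).2).
split => //.
- by move=> k; have [] := Hnext (Cs k, k.+1).
- by move=> k; case: (Cs k) => A [].
- by case=> // j; have [] := Hnext (Cs j, j.+1).
- by case=> // j a _; have [_ _] := Hnext (Cs j, j.+1); apply.
Qed.

End Refinement.

Section Envelopes.
Variables (R : realType) (s N : nat -> nat).

Definition reached (n : nat) : nat := \max_(j <- iota 0 n.+1 | (s j <= n)%N) j.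

Lemma reached_mono m n : (m <= n)%N -> (reached m <= reached n)%N.
Proof.
move=> mn; apply/bigmax_leqP_seq => i; rewrite mem_iota add0n => /andP[_ hi] hs.
apply: leq_bigmax_seq; last exact: leq_trans hs mn.
by rewrite mem_iota add0n (leq_trans hi).
Qed.

Lemma reached_ge j : (j <= s j)%N -> (j <= reached (s j))%N.
Proof. by move=> h; apply: leq_bigmax_seq => //; rewrite mem_iota add0n ltnS. Qed.

Lemma reached_ind n (P : nat -> Prop) : P 0%N ->
  (forall j, (j <= n)%N -> (s j <= n)%N -> P j) -> P (reached n).
Proof.
move=> P0 H; rewrite /reached big_seq_cond; apply: big_ind => //.
  by move=> x y Px Py; rewrite /maxn; case: ltnP.
by move=> i /andP[]; rewrite mem_iota add0n ltnS; apply: H.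
Qed.

Definition prefix_max (n : nat) : nat := \max_(j <- iota 0 n) N j.

Lemma prefix_max_mono m n : (m <= n)%N -> (prefix_max m <= prefix_max n)%N.
Proof.
move=> mn; apply/bigmax_leqP_seq => i; rewrite mem_iota add0n => /andP[_ hi] _.
by apply: leq_bigmax_seq => //; rewrite mem_iota add0n (leq_trans hi).
Qed.

Lemma prefix_max_ge j n : (j < n)%N -> (N j <= prefix_max n)%N.
Proof. by move=> jn; apply: leq_bigmax_seq => //; rewrite mem_iota add0n. Qed.

Definition lower_env (t : R) : R := (reached (Num.truncn t))%:R.
Definition upper_env (t : R) : R :=
  lower_env t + (prefix_max (Num.truncn t).+2)%:R.

Lemma lower_env_incr : incr_nonneg lower_env.
Proof.
split=> [t _|u t _ ut]; first exact: ler0n.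
by rewrite ler_nat; apply/reached_mono/le_truncn.
Qed.

Lemma upper_env_incr : incr_nonneg upper_env.
Proof.
split=> [t _|u t u0 ut]; first by apply: addr_ge0; apply: ler0n.
apply: lerD; first exact: lower_env_incr.2.
by rewrite ler_nat; apply: prefix_max_mono; rewrite !ltnS le_truncn.
Qed.

Lemma lower_le_upper t : lower_env t <= upper_env t.
Proof. by rewrite lerDl ler0n. Qed.

(* Since s j >= j, every index is eventually reached. *)
Lemma lower_env_cvg : (forall j, (j <= s j)%N) -> lower_env t @[t --> +oo] --> +oo.
Proof.
move=> s_ge; apply/cvgryPge => A.
pose j := (Num.truncn `|A|).+1.
near=> t.
have sj_le_t : (s j)%:R <= t by near: t; apply: nbhs_pinfty_ge; exact: realn.
apply: (le_trans (ler_norm A)); apply: (le_trans (ltW (truncnS_gt _))).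
rewrite ler_nat; apply: leq_trans (reached_ge (s_ge j)) _; apply: reached_mono.
by rewrite truncn_ge_nat // (le_trans _ sj_le_t).
Unshelve. all: end_near.
Qed.

Lemma lower_env_below (f : R -> R) (k : nat) (t : R) : incr_nonneg f ->
  0 <= t -> t <= k%:R ->
  (forall j, (0 < j <= k)%N -> j%:R <= f (s j)%:R) -> lower_env t <= f t.
Proof.
move=> [f0 f_incr] t0 tk Hf.
have tr_le_k : (Num.truncn t <= k)%N.
  by rewrite -(ler_nat R); apply: le_trans tk; rewrite truncn_le.
apply: (@reached_ind _ (fun x => x%:R <= f t)) => [|[|j] jt sjt]; first exact: f0.
  exact: f0.
apply: (le_trans (Hf j.+1 (leq_trans jt tr_le_k))); apply: f_incr; first exact: ler0n.
by apply: (@le_trans _ _ (Num.truncn t)%:R); rewrite ?ler_nat ?truncn_le.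
Qed.

(* Upper bound on [0,k] from the stage bounds g j <= N j, 1 <= j <= k:
   compare with the index j = min(k, floor t + 1) >= t. *)
Lemma upper_env_above (g : R -> R) (k : nat) (t : R) :
  (forall u v, 0 <= u -> u <= v -> g u <= g v) -> (0 < k)%N ->
  0 <= t -> t <= k%:R ->
  (forall j, (0 < j <= k)%N -> g j%:R <= (N j)%:R) -> g t <= upper_env t.
Proof.
move=> g_incr k0 t0 tk Hg.
have [j [j0 jk tj j_lt]] : exists j, [/\ (0 < j)%N, (j <= k)%N, t <= j%:R &
    (j < (Num.truncn t).+2)%N].
  have [h|h] := leqP (Num.truncn t).+1 k.
    by exists (Num.truncn t).+1; split => //; exact/ltW/truncnS_gt.
  by exists k; split => //; exact: ltnW.
apply: (le_trans (g_incr _ _ t0 tj)); apply: (le_trans (Hg j _)); first by rewrite j0.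
by apply: ler_wpDl; [exact: lower_env_incr.1 | rewrite ler_nat prefix_max_ge].
Qed.

End Envelopes.

Theorem lemma4p1 (R : realType) (T : Type) (lt : T -> T -> Prop)
  (Hw1 : is_omega1 lt) (C0 : set T) (HC0 : ~ countable C0)
  (rhoA omA : T -> R -> R)
  (Hrho : forall a, C0 a -> incr_nonneg (rhoA a))
  (Hom : forall a, C0 a -> incr_nonneg (omA a))
  (Hle : forall a, C0 a -> forall t, 0 <= t -> rhoA a t <= omA a t)
  (Hlim : forall a, C0 a -> rhoA a t @[t --> +oo] --> +oo) :
  exists (rho om : R -> R) (C : nat -> set T),
    [/\ incr_nonneg rho, incr_nonneg om,
        C 0%N = C0,
        (forall k, C k.+1 `<=` C k) &
        (forall k, ~ countable (C k))] /\
    (forall t, 0 <= t -> rho t <= om t) /\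
    rho t @[t --> +oo] --> +oo /\
    (forall k : nat, (1 <= k)%N -> forall a, C k a ->
       forall t, 0 <= t -> t <= k%:R -> rho t <= rhoA a t /\ omA a t <= om t).
Proof.
have [C [s [N [C_0 C_decr C_unc s_ge C_bounds]]]] :=
  refining_sequence omA Hlim HC0.
have C_antitone : {homo C : i j / (i <= j)%N >-> j `<=` i}.
  apply: homo_leq => [A|B A D BA DB|//]; [exact: subset_refl|exact: subset_trans DB BA].
have C_in_C0 k : C k `<=` C0 by rewrite -C_0; apply: C_antitone.
exists (@lower_env R s), (@upper_env R s N), C.
split; first by split; [exact: lower_env_incr|exact: upper_env_incr|..].
split; first by move=> t _; exact: lower_le_upper.
split; first exact: lower_env_cvg.
move=> k k0 a Cka t t0 tk.
have stage_bounds j : (0 < j <= k)%N ->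
    j%:R <= rhoA a (s j)%:R /\ omA a j%:R <= (N j)%:R.
  by case/andP=> j0 jk; apply: C_bounds j0 (C_antitone _ _ jk a Cka).
have C0a := C_in_C0 k a Cka.
split.
- by apply: lower_env_below (Hrho a C0a) t0 tk _ => j /stage_bounds [].
- by apply: upper_env_above (Hom a C0a).2 k0 t0 tk _ => j /stage_bounds [].
Qed.
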